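(* Let $F$ satisfy $2-\sqrt3\le F<2.4$, let $\varepsilon>0$, and consider $$P(X)=X^4-\varepsilon^2(1+F^2)X^2-2F\varepsilon X-1 .$$ Then there exists $\varepsilon_0>0$ (depending on $F$) such that for all $0<\varepsilon<\varepsilon_0$ the polynomial $P$ has exactly two real roots, a positive root $X_0^+$ and a negative root $X_0^-$, and they satisfy $$X_0^+-1\in(0,\varepsilon F),\qquad X_0^-+1\in(0,\varepsilon F).$$
   Context: This polynomial is the non-dimensional form of the dispersion relation $c^2(c^2k^2-f^2)=(c\hat f+\tilde g)^2$ for internal waves on the thermocline, via $X=c\sqrt{k/\tilde g}$, $\varepsilon=f/\sqrt{\tilde g k}$, $F=\hat f/f$, where $f=2\Omega\sin\phi$, $\hat f=2\Omega\cos\phi$ are the Coriolis parameters at latitude $\phi$, $k$ the wavenumber and $\tilde g$ the reduced gravity. The range $2-\sqrt3\le F<2.4$ corresponds to mid-latitudes (roughly $23^\circ26'16''$ to $75^\circ$), and the paper regards $\varepsilon$ as small (of order $10^{-2}$). *)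

From Stdlib Require Import Reals.
Open Scope R_scope.

Definition P (F eps X : R) : R :=
  X ^ 4 - eps ^ 2 * (1 + F ^ 2) * X ^ 2 - 2 * F * eps * X - 1.

From Stdlib Require Import Reals Lra Psatz.
Open Scope R_scope.

(* With d = eps F and K = eps^2 (1 + F^2), P is the quartic X^4 - K X^2 - 2 d X - 1,
   a small perturbation of X^4 - 1 since K = O(d^2).  Its sign changes on [1, 1 + d]
   and [-1, -1 + d] give the two roots by the intermediate value theorem.  Every root
   has |X| >= 1/2, and on each of the half-lines |X| >= 1/2 the quartic is injective,
   because P(X) - P(Y) = (X - Y) ((X + Y)(X^2 + Y^2 - K) - 2 d) and the second factor
   cannot vanish there. *)

Lemma IVT_open (f : R -> R) (a b : R) :
  continuity f -> a < b -> f a < 0 -> 0 < f b ->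
  exists x, a < x < b /\ f x = 0.
Proof.
  intros Hf Hab Ha Hb.
  destruct (IVT f a b Hf Hab Ha Hb) as [x [[Hax Hxb] Hx]].
  exists x; split; [split|exact Hx].
  - destruct Hax as [H|H]; [exact H|subst; lra].
  - destruct Hxb as [H|H]; [exact H|subst; lra].
Qed.

Definition quartic (K d X : R) : R := X ^ 4 - K * X ^ 2 - 2 * d * X - 1.

Lemma P_eq_quartic (F eps X : R) :
  P F eps X = quartic (eps ^ 2 * (1 + F ^ 2)) (eps * F) X.
Proof. unfold P, quartic; ring. Qed.

Lemma quartic_continuity (K d : R) : continuity (quartic K d).
Proof. unfold quartic; reg. Qed.

Lemma quartic_sub (K d X Y : R) :
  quartic K d X - quartic K d Y =
  (X - Y) * ((X + Y) * (X ^ 2 + Y ^ 2 - K) - 2 * d).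
Proof. unfold quartic; ring. Qed.

Section SmallPerturbation.

Variables K d : R.
Hypotheses (HK0 : 0 <= K) (HKd : K <= d) (Hd0 : 0 < d) (Hd : d <= 1 / 8).

Lemma quartic_1_lt0 : quartic K d 1 < 0.
Proof. unfold quartic; lra. Qed.

Lemma quartic_1_add_gt0 : 0 < quartic K d (1 + d).
Proof.
  unfold quartic.
  assert (K * (1 + d) ^ 2 <= d * (81 / 64)) by nra.
  nra.
Qed.

Lemma quartic_m1_gt0 : 0 < quartic K d (-1).
Proof. unfold quartic; lra. Qed.

Lemma quartic_m1_add_lt0 : quartic K d (-1 + d) < 0.
Proof.
  unfold quartic.
  assert (0 <= K * (-1 + d) ^ 2) by (apply Rmult_le_pos; [lra|apply pow2_ge_0]).
  nra.
Qed.

Lemma quartic_root_far_from0 (X : R) :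
  quartic K d X = 0 -> 1 / 2 <= X \/ X <= - (1 / 2).
Proof.
  unfold quartic; intros HX.
  destruct (Rle_or_lt (1 / 2) X); [now left|].
  destruct (Rle_or_lt X (- (1 / 2))); [now right|].
  exfalso.
  assert (X ^ 2 <= 1 / 4) by nra.
  assert (X ^ 4 <= 1 / 16) by nra.
  assert (- (1 / 2) * d <= d * X <= 1 / 2 * d) by nra.
  nra.
Qed.

Lemma quartic_eq_factor (X Y : R) :
  quartic K d X = quartic K d Y -> X <> Y ->
  (X + Y) * (X ^ 2 + Y ^ 2 - K) = 2 * d.
Proof.
  intros HXY Hne.
  pose proof (quartic_sub K d X Y) as D.
  rewrite HXY, Rminus_diag in D.
  symmetry in D; apply Rmult_integral in D as [D|D]; lra.
Qed.

Lemma quartic_inj_pos (X Y : R) :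
  1 / 2 <= X -> 1 / 2 <= Y -> quartic K d X = quartic K d Y -> X = Y.
Proof.
  intros HX HY HXY.
  destruct (Req_dec X Y) as [|Hne]; [assumption|exfalso].
  pose proof (quartic_eq_factor X Y HXY Hne).
  assert (3 / 8 <= X ^ 2 + Y ^ 2 - K) by nra.
  nra.
Qed.

Lemma quartic_inj_neg (X Y : R) :
  X <= - (1 / 2) -> Y <= - (1 / 2) -> quartic K d X = quartic K d Y -> X = Y.
Proof.
  intros HX HY HXY.
  destruct (Req_dec X Y) as [|Hne]; [assumption|exfalso].
  pose proof (quartic_eq_factor X Y HXY Hne).
  assert (3 / 8 <= X ^ 2 + Y ^ 2 - K) by nra.
  nra.
Qed.

Lemma quartic_two_roots :
  exists Xp Xm : R,
    0 < Xp /\ Xm < 0 /\ quartic K d Xp = 0 /\ quartic K d Xm = 0 /\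
    (forall X : R, quartic K d X = 0 -> X = Xp \/ X = Xm) /\
    0 < Xp - 1 < d /\ 0 < Xm + 1 < d.
Proof.
  destruct (IVT_open (quartic K d) 1 (1 + d) (quartic_continuity K d)
              ltac:(lra) quartic_1_lt0 quartic_1_add_gt0) as [Xp [HXp HXp0]].
  destruct (IVT_open (fun X => - quartic K d X) (-1) (-1 + d)
              (continuity_opp _ (quartic_continuity K d)) ltac:(lra)
              ltac:(pose proof quartic_m1_gt0; lra)
              ltac:(pose proof quartic_m1_add_lt0; lra)) as [Xm [HXm HXm0]].
  assert (HXm0' : quartic K d Xm = 0) by lra.
  exists Xp, Xm.
  repeat split; try lra.
  intros X HX.
  destruct (quartic_root_far_from0 X HX) as [Hpos|Hneg].
  - left; apply quartic_inj_pos; lra.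
  - right; apply quartic_inj_neg; lra.
Qed.

End SmallPerturbation.

Lemma sqrt3_lt_2 : sqrt 3 < 2.
Proof. rewrite <- (sqrt_pow2 2) by lra. apply sqrt_lt_1_alt; lra. Qed.

Lemma eps_regime (F eps : R) :
  0 < F -> 0 < eps < F / (8 * (1 + F ^ 2)) ->
  0 <= eps ^ 2 * (1 + F ^ 2) /\ eps ^ 2 * (1 + F ^ 2) <= eps * F /\
  0 < eps * F /\ eps * F <= 1 / 8.
Proof.
  intros HF [He0 He1].
  assert (HF2 : 0 < 1 + F ^ 2) by nra.
  assert (Hb : eps * (8 * (1 + F ^ 2)) < F).
  { apply (Rmult_lt_compat_r (8 * (1 + F ^ 2))) in He1; [|lra].
    unfold Rdiv in He1; rewrite Rmult_assoc, Rinv_l in He1; lra. }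
  repeat split; nra.
Qed.

Theorem mainTheorem2 (F : R) (hF1 : 2 - sqrt 3 <= F) (hF2 : F < 24 / 10) :
  exists eps0 : R, 0 < eps0 /\
    forall eps : R, 0 < eps < eps0 ->
      exists Xp Xm : R,
        0 < Xp /\ Xm < 0 /\ P F eps Xp = 0 /\ P F eps Xm = 0 /\
        (forall X : R, P F eps X = 0 -> X = Xp \/ X = Xm) /\
        0 < Xp - 1 < eps * F /\
        0 < Xm + 1 < eps * F.
Proof.
  assert (HF : 0 < F) by (pose proof sqrt3_lt_2; lra).
  exists (F / (8 * (1 + F ^ 2))).
  split.
  { apply Rdiv_lt_0_compat; nra. }
  intros eps Heps.
  destruct (eps_regime F eps HF Heps) as (HK0 & HKd & Hd0 & Hd).
  setoid_rewrite P_eq_quartic.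
  exact (quartic_two_roots _ _ HK0 HKd Hd0 Hd).
Qed.
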